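(* Let $f:\{0,1\}^n\to\{0,1\}$ be a total Boolean function and $g=1-2f:\{0,1\}^n\to\{-1,1\}$. Let $R=H\,\mathrm{diag}(g)\,H$. Then $\lambda(f)=\max_{v\in\mathbb{R}^{2^n}:\|v\|=1} v^{\mathsf T}(RXR-X)v$.
   Context: $H$ is the $2^n\times2^n$ matrix indexed by $\{0,1\}^n$ with $H_{xy}=(-1)^{\langle x,y\rangle}2^{-n/2}$. $\mathrm{diag}(g)$ is the diagonal matrix with $\mathrm{diag}(g)_{xx}=g(x)$, and $X$ is the diagonal matrix with $X_{xx}=|x|$, the Hamming weight of $x$. The sensitivity graph $G_f$ has vertex set $\{0,1\}^n$ and an edge between $x,y$ iff they differ in exactly one coordinate and $f(x)\ne f(y)$; $A_f$ is its adjacency matrix and $\lambda(f)=\|A_f\|$. *)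

From HB Require Import structures.
From mathcomp Require Import all_boot all_order all_algebra.
From mathcomp Require Import classical_sets reals.
Set Implicit Arguments. Unset Strict Implicit. Unset Printing Implicit Defensive.
Import Order.TTheory GRing.Theory Num.Theory.
Local Open Scope ring_scope.

(* The cube {0,1}^n is encoded as 'I_(2^n): x encodes the bit string
   (bit x 0, ..., bit x (n-1)) (binary expansion). *)
Definition bit (n : nat) (x : 'I_(2 ^ n)) (i : 'I_n) : bool := odd (x %/ 2 ^ i).

(* <x,y> = sum_i x_i y_i (as a natural number; only its parity matters) *)
Definition dotb (n : nat) (x y : 'I_(2 ^ n)) : nat :=
  (\sum_(i < n) (bit x i && bit y i))%N.

Definition hweight (n : nat) (x : 'I_(2 ^ n)) : nat := (\sum_(i < n) bit x i)%N.

Definition hdist (n : nat) (x y : 'I_(2 ^ n)) : nat :=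
  (\sum_(i < n) (bit x i != bit y i))%N.

Section Mats.
Variables (R : realType) (n : nat).

Definition hadamard : 'M[R]_(2 ^ n) :=
  \matrix_(x, y) ((-1) ^+ dotb x y / Num.sqrt (2 ^+ n)).

Definition diagf (g : 'I_(2 ^ n) -> R) : 'M[R]_(2 ^ n) :=
  \matrix_(x, y) (if x == y then g x else 0).

Definition weightmx : 'M[R]_(2 ^ n) := diagf (fun x => (hweight x)%:R).

Definition sens_adj (f : 'I_(2 ^ n) -> bool) : 'M[R]_(2 ^ n) :=
  \matrix_(x, y) (if (hdist x y == 1)%N && (f x != f y) then 1 else 0).

Definition vnorm (v : 'cV[R]_(2 ^ n)) : R := Num.sqrt (\sum_i v i 0 ^+ 2).

Definition opnorm (A : 'M[R]_(2 ^ n)) : R :=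
  sup [set vnorm (A *m v) | v in [set v | vnorm v = 1]].

Definition qform (M : 'M[R]_(2 ^ n)) (v : 'cV[R]_(2 ^ n)) : R :=
  (v^T *m M *m v) 0 0.

Definition lambdaf (f : 'I_(2 ^ n) -> bool) : R := opnorm (sens_adj f).

Definition gsign (f : 'I_(2 ^ n) -> bool) (x : 'I_(2 ^ n)) : R := 1 - 2 * (f x)%:R.

Definition Rmx (f : 'I_(2 ^ n) -> bool) : 'M[R]_(2 ^ n) :=
  hadamard *m diagf (gsign f) *m hadamard.

End Mats.

(* H is symmetric and an involution, and a character-sum computation
   shows that H X H is (n/2) I minus half the adjacency matrix of the cube.
   Conjugating Q = R X R - X by H therefore gives
   H Q H = D (H X H) D - H X H = A_f, where D = diag(g), because
   g(x) g(y) - 1 = -2 exactly when f(x) != f(y).  So v^T Q v = u^T A_f u with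
   u = H v, and H preserves the Euclidean norm.
   It remains to see that the maximum of u^T A u on the unit sphere is ||A||
   for A = A_f.  For any symmetric A it is at most ||A|| by Cauchy-Schwarz;
   moreover ||A||^2 - A^2 is positive semidefinite and singular (a uniform gap
   would contradict the definition of the sup), so A has a unit eigenvector
   for ||A|| or for -||A||.  Since G_f is bipartite (edges change the parity
   of the Hamming weight), flipping signs at odd-weight points turns an
   eigenvector for -||A_f|| into one for ||A_f||, at which the form equals
   ||A_f||. *)

From HB Require Import structures.
From mathcomp Require Import all_boot all_order all_algebra.
From mathcomp Require Import classical_sets reals.
From mathcomp Require Import ring lra.
Set Implicit Arguments. Unset Strict Implicit. Unset Printing Implicit Defensive.
Import Order.TTheory GRing.Theory Num.Theory.
Local Open Scope ring_scope.

Lemma nonneg_quadratic_disc (R : realFieldType) (a b c : R) : 0 <= c ->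
  (forall t : R, 0 <= a + 2 * b * t + c * t ^+ 2) -> b ^+ 2 <= a * c.
Proof.
move=> c_ge0 nonneg.
have [c0|c_neq0] := eqVneq c 0.
  have [b0|b_neq0] := eqVneq b 0; first by rewrite b0 c0 expr0n mulr0.
  have := nonneg (- (a + 1) / (2 * b)); rewrite c0 mul0r addr0.
  have -> : 2 * b * (- (a + 1) / (2 * b)) = - (a + 1) by field; rewrite b_neq0.
  lra.
have c_gt0 : 0 < c by rewrite lt_def c_neq0.
have := nonneg (- b / c).
have -> : a + 2 * b * (- b / c) + c * (- b / c) ^+ 2 = (a * c - b ^+ 2) / c.
  by field.
by rewrite pmulr_lge0 ?invr_gt0 // subr_ge0.
Qed.

Section BilinearForms.
Variables (R : realType) (m : nat).
Implicit Types (P M : 'M[R]_m) (x y z v : 'cV[R]_m).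

(* The bilinear form x^T P y; qform M v of the statement is bform M v v. *)
Definition bform P x y : R := (x^T *m P *m y) 0 0.

Lemma bformC P x y : P^T = P -> bform P y x = bform P x y.
Proof.
move=> symP; rewrite /bform.
have <- : (y^T *m P *m x)^T = x^T *m P *m y by rewrite !trmx_mul trmxK symP mulmxA.
by rewrite [RHS]mxE.
Qed.

Lemma bformDl P x y z : bform P (y + z) x = bform P y x + bform P z x.
Proof. by rewrite /bform raddfD /= !mulmxDl mxE. Qed.

Lemma bformDr P x y z : bform P x (y + z) = bform P x y + bform P x z.
Proof. by rewrite /bform mulmxDr mxE. Qed.

Lemma bformZl P x y (t : R) : bform P (t *: y) x = t * bform P y x.
Proof. by rewrite /bform linearZ /= -!scalemxAl mxE. Qed.

Lemma bformZr P x y (t : R) : bform P x (t *: y) = t * bform P x y.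
Proof. by rewrite /bform -scalemxAr mxE. Qed.

Lemma bformB P M x y : bform (P - M) x y = bform P x y - bform M x y.
Proof. by rewrite /bform mulmxBr mulmxBl !mxE. Qed.

Lemma bformZ (c : R) P x y : bform (c *: P) x y = c * bform P x y.
Proof. by rewrite /bform -scalemxAr -scalemxAl mxE. Qed.

Lemma bform_mulr M x y : bform M x y = bform 1%:M x (M *m y).
Proof. by rewrite /bform mulmx1 mulmxA. Qed.

Lemma bform_CauchySchwarz P x y : P^T = P -> (forall z, 0 <= bform P z z) ->
  bform P x y ^+ 2 <= bform P x x * bform P y y.
Proof.
move=> symP psdP; apply: nonneg_quadratic_disc; first exact: psdP.
move=> t; have -> : bform P x x + 2 * bform P x y * t + bform P y y * t ^+ 2 =
                    bform P (x + t *: y) (x + t *: y).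
  by rewrite !bformDl !bformDr !bformZl !bformZr (bformC y x symP); ring.
exact: psdP.
Qed.

Definition sqnorm v : R := \sum_i v i 0 ^+ 2.

Lemma bform1 x y : bform 1%:M x y = \sum_i x i 0 * y i 0.
Proof. by rewrite /bform mulmx1 mxE; apply: eq_bigr => i _; rewrite mxE. Qed.

Lemma bform1_sqnorm v : bform 1%:M v v = sqnorm v.
Proof. by rewrite bform1; apply: eq_bigr => i _; rewrite expr2. Qed.

Lemma sqnorm_ge0 v : 0 <= sqnorm v.
Proof. by apply: sumr_ge0 => i _; exact: sqr_ge0. Qed.

Lemma sqnormZ (t : R) v : sqnorm (t *: v) = t ^+ 2 * sqnorm v.
Proof. by rewrite -!bform1_sqnorm bformZl bformZr mulrA expr2. Qed.

Lemma sqnorm_eq0 v : sqnorm v = 0 -> v = 0.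
Proof.
move=> /eqP; rewrite psumr_eq0 => [/allP v0|i _]; last exact: sqr_ge0.
apply/matrixP => i j; rewrite (ord1 j) mxE.
by have := v0 i (mem_index_enum i); rewrite sqrf_eq0 => /eqP.
Qed.

Lemma dot_CauchySchwarz x y : bform 1%:M x y ^+ 2 <= sqnorm x * sqnorm y.
Proof.
rewrite -!bform1_sqnorm; apply: bform_CauchySchwarz; first by rewrite trmx1.
by move=> z; rewrite bform1_sqnorm sqnorm_ge0.
Qed.

Lemma bform_sqr M v : M^T = M -> bform (M *m M) v v = sqnorm (M *m v).
Proof. by move=> symM; rewrite -bform1_sqnorm /bform mulmx1 trmx_mul symM !mulmxA. Qed.

Lemma sqnorm_orthogonal U v : U^T *m U = 1%:M -> sqnorm (U *m v) = sqnorm v.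
Proof.
move=> UU; rewrite -!bform1_sqnorm /bform trmx_mul !mulmx1 mulmxA.
by rewrite -(mulmxA _ U^T) UU mulmx1.
Qed.

Lemma bform_conj U M v : bform (U^T *m M *m U) v v = bform M (U *m v) (U *m v).
Proof. by rewrite /bform trmx_mul !mulmxA. Qed.

(* The Frobenius norm gives a crude bound |M v|^2 <= frob M |v|^2, used for
   the boundedness of the operator norm and for bounding inverses. *)
Definition frob M : R := \sum_i \sum_j M i j ^+ 2.

Lemma sqnorm_mul_le_frob M v : sqnorm (M *m v) <= frob M * sqnorm v.
Proof.
rewrite /frob mulr_suml; apply: ler_sum => i _.
pose r : 'cV[R]_m := \col_j M i j.
have -> : (M *m v) i 0 = bform 1%:M r v.
  by rewrite bform1 mxE; apply: eq_bigr => j _; rewrite mxE.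
have -> : \sum_j M i j ^+ 2 = sqnorm r by apply: eq_bigr => j _; rewrite mxE.
exact: dot_CauchySchwarz.
Qed.

(* The Euclidean norm, as in vnorm. *)
Definition enorm v : R := Num.sqrt (sqnorm v).

Lemma enorm1_sqnorm v : enorm v = 1 -> sqnorm v = 1.
Proof. by move=> v1; rewrite -(sqr_sqrtr (sqnorm_ge0 v)) -/(enorm v) v1 expr1n. Qed.

Lemma sqnorm1_enorm v : sqnorm v = 1 -> enorm v = 1.
Proof. by rewrite /enorm => ->; rewrite sqrtr1. Qed.

Lemma sqr_enorm v : enorm v ^+ 2 = sqnorm v.
Proof. by rewrite sqr_sqrtr ?sqnorm_ge0. Qed.

Lemma normalize v : v != 0 -> exists2 w, enorm w = 1 & exists c : R, w = c *: v.
Proof.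
move=> v_neq0.
have v_gt0 : 0 < sqnorm v.
  by rewrite lt_def sqnorm_ge0 andbT; apply: contra v_neq0 => /eqP/sqnorm_eq0 ->.
have r_gt0 : 0 < enorm v by rewrite sqrtr_gt0.
exists ((enorm v)^-1 *: v); last by exists (enorm v)^-1.
by apply: sqnorm1_enorm; rewrite sqnormZ exprVn sqr_enorm mulVf ?gt_eqF.
Qed.

Lemma dot_unit_le v x : enorm v = 1 -> bform 1%:M v x <= enorm x.
Proof.
move=> v1; apply: le_trans (ler_norm _) _; rewrite -sqrtr_sqr; apply: ler_wsqrtr.
by have := dot_CauchySchwarz v x; rewrite (enorm1_sqnorm v1) mul1r.
Qed.

Lemma nonunit_kernel M : M \notin unitmx -> exists2 u : 'cV[R]_m, u != 0 & M *m u = 0.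
Proof.
rewrite -unitmx_tr unitmxE unitfE negbK => /det0P [v v_neq0 vM0].
by exists v^T; rewrite ?trmx_eq0 // -[M]trmxK -trmx_mul vM0 trmx0.
Qed.

Lemma nonunit_eigenvector M (a : R) : a *: 1%:M - M \notin unitmx ->
  exists2 u : 'cV[R]_m, enorm u = 1 & M *m u = a *: u.
Proof.
move=> /nonunit_kernel [u u_neq0 /eqP]; rewrite mulmxBl -scalemxAl mul1mx subr_eq0.
move=> /eqP Mu; have [w w1 [c wE]] := normalize u_neq0; subst w.
by exists (c *: u) => //; rewrite -scalemxAr -Mu !scalerA mulrC.
Qed.

End BilinearForms.

Section OperatorNorm.
Variables (R : realType) (m : nat).
Hypothesis m_gt0 : (0 < m)%N.
Implicit Types (A P : 'M[R]_m) (v : 'cV[R]_m).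
Local Open Scope classical_set_scope.

(* The operator norm ||A|| = sup_{|v| = 1} |A v|, as in opnorm. *)
Definition normset A := [set enorm (A *m v) | v in [set v | enorm v = 1]].
Definition onorm A : R := sup (normset A).

Lemma exists_unit_vector : exists v : 'cV[R]_m, enorm v = 1.
Proof.
pose e : 'cV[R]_m := \col_i (i == Ordinal m_gt0)%:R.
exists e; apply: sqnorm1_enorm.
rewrite /sqnorm (bigD1 (Ordinal m_gt0)) //= big1 ?mxE ?eqxx ?addr0 ?expr1n //.
by move=> i /negbTE i_neq; rewrite mxE i_neq expr0n.
Qed.

(* The norms |A v| on the unit sphere are bounded (by sqrt (frob A)), so the
   sup defining ||A|| is a genuine least upper bound. *)
Lemma normset_ubound A : has_ubound (normset A).
Proof.
exists (Num.sqrt (frob A)) => _ [v /= v1 <-].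
apply: ler_wsqrtr.
by have := sqnorm_mul_le_frob A v; rewrite (enorm1_sqnorm v1) mulr1.
Qed.

Lemma enorm_le_onorm A v : enorm v = 1 -> enorm (A *m v) <= onorm A.
Proof. by move=> v1; apply: ub_le_sup; [exact: normset_ubound | exists v]. Qed.

Lemma normset_neq0 A : normset A !=set0.
Proof. by have [v v1] := exists_unit_vector; exists (enorm (A *m v)), v. Qed.

Lemma onorm_ge0 A : 0 <= onorm A.
Proof.
have [v v1] := exists_unit_vector.
exact: le_trans (sqrtr_ge0 _) (enorm_le_onorm A v1).
Qed.

Lemma sqnorm_mul_le_onorm A v : sqnorm (A *m v) <= onorm A ^+ 2 * sqnorm v.
Proof.
have [v0|v_neq0] := eqVneq v 0.
  by rewrite v0 mulmx0 /sqnorm big1 ?mulr0 // => i _; rewrite mxE expr0n.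
have [w w1 [c wE]] := normalize v_neq0; subst w.
have /enorm1_sqnorm := w1; rewrite sqnormZ => cv1.
have : enorm (A *m (c *: v)) ^+ 2 <= onorm A ^+ 2.
  by apply: lerXn2r; rewrite ?nnegrE ?sqrtr_ge0 ?onorm_ge0 ?enorm_le_onorm.
rewrite sqr_enorm -scalemxAr sqnormZ => le_sAv.
by rewrite -[sqnorm (A *m v)]mul1r -cv1 mulrAC (ler_wpM2r (sqnorm_ge0 v)).
Qed.

Lemma bform_le_onorm A v : enorm v = 1 -> bform A v v <= onorm A.
Proof.
by move=> v1; rewrite bform_mulr; apply: le_trans (dot_unit_le _ v1) (enorm_le_onorm A v1).
Qed.

(* An invertible positive semidefinite symmetric matrix is bounded below
   on the unit sphere: 1 = <v, P (P^-1 v)>^2 <= (v^T P v) (v^T P^-1 v). *)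
Lemma psd_unit_gap P : P^T = P -> (forall v, 0 <= bform P v v) ->
  P \in unitmx -> exists2 c : R, 0 < c & forall v, enorm v = 1 -> c <= bform P v v.
Proof.
move=> symP psdP unitP; pose k := Num.sqrt (frob (invmx P)).
have key v : enorm v = 1 -> 1 <= bform P v v * k.
  move=> v1; pose y := invmx P *m v.
  have Py : P *m y = v by rewrite /y mulmxA mulmxV // mul1mx.
  have vPy : bform P v y = 1.
    by rewrite bform_mulr Py bform1_sqnorm (enorm1_sqnorm v1).
  have yPy : bform P y y <= k.
    rewrite bform_mulr Py bformC ?trmx1 //; apply: le_trans (dot_unit_le y v1) _.
    apply: ler_wsqrtr.
    by have := sqnorm_mul_le_frob (invmx P) v; rewrite (enorm1_sqnorm v1) mulr1.
  have := bform_CauchySchwarz v y symP psdP; rewrite vPy expr1n.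
  by move=> /le_trans; apply; apply: ler_wpM2l.
have k_gt0 : 0 < k.
  rewrite lt_def sqrtr_ge0 andbT; apply/eqP => k0.
  by have [v /key] := exists_unit_vector; rewrite k0 mulr0 ler10.
exists k^-1; first by rewrite invr_gt0.
by move=> v /key le1; rewrite -(ler_pM2r k_gt0) mulVf ?gt_eqF.
Qed.

(* For symmetric A the matrix ||A||^2 - A^2 is singular: it is positive
   semidefinite, and a uniform gap would contradict the definition of the sup. *)
Lemma onorm_sqr_singular A : A^T = A ->
  (onorm A ^+ 2 *: 1%:M - A *m A) \notin unitmx.
Proof.
move=> symA; set s := onorm A; set P := _ - _.
have symP : P^T = P by rewrite /P linearB /= linearZ /= trmx1 trmx_mul symA.
have qP v : bform P v v = s ^+ 2 * sqnorm v - sqnorm (A *m v).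
  by rewrite /P bformB bformZ bform_sqr // bform1_sqnorm.
have psdP v : 0 <= bform P v v.
  by rewrite qP subr_ge0; exact: sqnorm_mul_le_onorm.
apply/negP => /(psd_unit_gap symP psdP) [c c_gt0 gap].
have le_Av v : enorm v = 1 -> sqnorm (A *m v) <= s ^+ 2 - c.
  by move=> v1; have := gap v v1; rewrite qP (enorm1_sqnorm v1) mulr1; lra.
have [v v1] := exists_unit_vector.
have t_ge0 : 0 <= s ^+ 2 - c := le_trans (sqnorm_ge0 _) (le_Av v v1).
have : s <= Num.sqrt (s ^+ 2 - c).
  apply: ge_sup; first exact: normset_neq0.
  by move=> _ [w /= w1 <-]; apply: ler_wsqrtr; exact: le_Av.
move=> le_s; have : s ^+ 2 <= s ^+ 2 - c.
  by rewrite -[X in _ <= X](sqr_sqrtr t_ge0) lerXn2r ?nnegrE ?onorm_ge0 ?sqrtr_ge0.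
lra.
Qed.

Lemma symmetric_extreme_eigenvector A : A^T = A -> exists2 u : 'cV[R]_m,
  enorm u = 1 & A *m u = onorm A *: u \/ A *m u = - onorm A *: u.
Proof.
move=> symA; set s := onorm A.
have := onorm_sqr_singular symA; rewrite -/s.
have -> : s ^+ 2 *: 1%:M - A *m A = (s *: 1%:M - A) *m (s *: 1%:M + A).
  rewrite mulmxDr !mulmxBl -!scalemxAl -!scalemxAr !mul1mx !mulmx1 scalerA -expr2.
  by rewrite addrA subrK.
rewrite unitmx_mul negb_and => /orP [/nonunit_eigenvector [u u1 Au]|sing_plus].
  by exists u => //; left.
have : (- s) *: 1%:M - A \notin unitmx.
  rewrite (_ : _ - A = -1 *: (s *: 1%:M + A)) ?unitmxZ ?unitrN1 //.
  by rewrite scaleN1r opprD scaleNr.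
by move=> /nonunit_eigenvector [u u1 Au]; exists u => //; right.
Qed.

Lemma max_bform_onorm A : A^T = A ->
  (forall u, A *m u = - onorm A *: u ->
     exists2 u' : 'cV[R]_m, A *m u' = onorm A *: u' & sqnorm u' = sqnorm u) ->
  (exists v, enorm v = 1 /\ bform A v v = onorm A) /\
  (forall v, enorm v = 1 -> bform A v v <= onorm A).
Proof.
move=> symA flip; split; last exact: bform_le_onorm.
have [u u1 Au] : exists2 u : 'cV[R]_m, enorm u = 1 & A *m u = onorm A *: u.
  have [u u1 [Au|/flip [u' Au' u'u]]] := symmetric_extreme_eigenvector symA.
    by exists u.
  by exists u' => //; apply: sqnorm1_enorm; rewrite u'u enorm1_sqnorm.
exists u; split => //.
by rewrite bform_mulr Au bformZr bform1_sqnorm (enorm1_sqnorm u1) mulr1.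
Qed.

End OperatorNorm.

Lemma binary_expansion n x : (x < 2 ^ n)%N ->
  x = (\sum_(i < n) odd (x %/ 2 ^ i) * 2 ^ i)%N.
Proof.
elim: n x => [|n IH] x x_lt; first by rewrite big_ord0; move: x_lt; rewrite expn0; case: x.
rewrite big_ord_recl /= expn0 divn1 muln1.
have half_lt : (x %/ 2 < 2 ^ n)%N by rewrite ltn_divLR // -expnSr.
rewrite {1}[x](esym (odd_double_half x)); congr (_ + _)%N.
rewrite -divn2 [X in X.*2](IH _ half_lt) -mul2n big_distrr /=; apply: eq_bigr => i _.
by rewrite /bump /= add1n expnS divnMA divn2 mulnCA.
Qed.

Definition bits n (x : 'I_(2 ^ n)) : {ffun 'I_n -> bool} := [ffun i => bit x i].

Lemma bits_inj n : injective (@bits n).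
Proof.
move=> x y /ffunP same; apply: val_inj.
rewrite /= (binary_expansion (ltn_ord x)) (binary_expansion (ltn_ord y)).
by apply: eq_bigr => i _; have := same i; rewrite !ffunE /bit => ->.
Qed.

Lemma bits_bij n : bijective (@bits n).
Proof.
apply: inj_card_bij; first exact: bits_inj.
by rewrite card_ffun card_bool !card_ord.
Qed.

Lemma sum_bits (V : nmodType) n (F : {ffun 'I_n -> bool} -> V) :
  \sum_(z : 'I_(2 ^ n)) F (bits z) = \sum_b F b.
Proof. by rewrite (reindex (@bits n)) //; apply: onW_bij; exact: bits_bij. Qed.

Lemma bits_neq n (x y : 'I_(2 ^ n)) : x != y -> exists k, bit x k != bit y k.
Proof.
move=> x_neq_y; have [k xyk|same] := pickP (fun k => bit x k != bit y k).
  by exists k.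
case/eqP: x_neq_y; apply: bits_inj; apply/ffunP => i; rewrite !ffunE.
by have := same i; move/negbFE/eqP.
Qed.

Lemma weight_parity n (x y : 'I_(2 ^ n)) :
  odd (hweight x + hweight y) = odd (hdist x y).
Proof.
have -> : (hweight x + hweight y = hdist x y + (\sum_i (bit x i && bit y i)).*2)%N.
  rewrite /hweight /hdist -addnn -!big_split /=; apply: eq_bigr => i _.
  by case: (bit x i); case: (bit y i).
by rewrite oddD odd_double addbF.
Qed.

Section Hadamard.
Variables (R : realType) (n : nat).
Local Notation N := (2 ^ n)%N.
Local Notation H := (hadamard R n).
Local Notation X := (weightmx R n).

(* The factor (-1)^(a_i c) of the character b |-> (-1)^<a,b> of the cube. *)
Definition sgnterm (a : 'I_n -> bool) (i : 'I_n) (c : bool) : R := (-1) ^+ (a i && c).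

Lemma sum_character (a : 'I_n -> bool) :
  \sum_(b : {ffun 'I_n -> bool}) \prod_i sgnterm a i (b i) =
  \prod_i ((-1) ^+ a i + 1).
Proof.
rewrite -bigA_distr_bigA /=; apply: eq_bigr => i _.
by rewrite big_bool /sgnterm andbT andbF.
Qed.

Lemma sum_character_weight (a : 'I_n -> bool) :
  \sum_(b : {ffun 'I_n -> bool}) (\prod_i sgnterm a i (b i)) * (\sum_j (b j : nat))%:R =
  \sum_j ((-1) ^+ a j * \prod_(i | i != j) ((-1) ^+ a i + 1)).
Proof.
under eq_bigr do rewrite natr_sum mulr_sumr.
rewrite exchange_big /=; apply: eq_bigr => j _.
pose F i (c : bool) := sgnterm a i c * (if i == j then (c : nat)%:R else 1).
transitivity (\sum_(b : {ffun 'I_n -> bool}) \prod_i F i (b i)).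
  apply: eq_bigr => b _; rewrite big_split /=; congr (_ * _).
  by rewrite -big_mkcond big_pred1_eq.
rewrite -bigA_distr_bigA /= (bigD1 j) //=; congr (_ * _).
  by rewrite big_bool /F eqxx /sgnterm andbT andbF /= mulr1 mulr0 addr0.
by apply: eq_bigr => i /negbTE ij; rewrite big_bool /F ij /sgnterm andbT andbF !mulr1.
Qed.

Lemma prod_sgn1_const (a : 'I_n -> bool) (P : pred 'I_n) :
  (forall i, P i -> a i = false) ->
  \prod_(i | P i) ((-1) ^+ a i + 1) = \prod_(i | P i) 2 :> R.
Proof. by move=> a0; apply: eq_bigr => i /a0 ->; rewrite expr0. Qed.

Lemma prod_sgn1_eq0 (a : 'I_n -> bool) k (P : pred 'I_n) : a k -> P k ->
  \prod_(i | P i) ((-1) ^+ a i + 1) = 0 :> R.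
Proof. by move=> ak Pk; rewrite (bigD1 k) //= ak expr1 addNr mul0r. Qed.

Lemma two_exp_neq0 : (2 ^+ n : R) != 0.
Proof. by rewrite expf_neq0 // pnatr_eq0. Qed.

Lemma hadamardT : H^T = H.
Proof.
apply/matrixP => x y; rewrite !mxE /dotb.
by congr (_ ^+ _ / _); apply: eq_bigr => i _; rewrite andbC.
Qed.

Lemma hadamard_entry_prod (x z y : 'I_N) : H x z * H z y =
  (\prod_i sgnterm (fun i => bit x i != bit y i) i (bits z i)) / 2 ^+ n.
Proof.
rewrite !mxE mulrACA -invfM -expr2 sqr_sqrtr ?exprn_ge0 //; congr (_ / _).
rewrite /dotb -!prodrXr -big_split /=; apply: eq_bigr => i _.
rewrite /sgnterm ffunE.
by case: (bit x i); case: (bit y i); case: (bit z i);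
  rewrite /= ?(expr0, expr1, mulr1, mul1r, mulrNN).
Qed.

Lemma hadamard_conj_diag (d : 'I_N -> R) (x y : 'I_N) :
  (H *m diagf d *m H) x y = \sum_z H x z * H z y * d z.
Proof.
rewrite mxE; apply: eq_bigr => z _; rewrite mxE (bigD1 z) //= big1 ?addr0.
  by rewrite /diagf mxE eqxx mulrAC.
by move=> w /negbTE wz; rewrite /diagf mxE wz mulr0.
Qed.

Lemma hadamard_invol : H *m H = 1%:M.
Proof.
apply/matrixP => x y; rewrite mxE.
under eq_bigr do rewrite hadamard_entry_prod.
rewrite -mulr_suml (sum_bits (fun b => \prod_i sgnterm _ i (b i))) sum_character mxE.
have [<-|x_neq_y] := eqVneq x y.
  by rewrite prod_sgn1_const ?prodr_const ?card_ord ?divff ?two_exp_neq0 // => i; rewrite eqxx.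
by have [k xyk] := bits_neq x_neq_y; rewrite (@prod_sgn1_eq0 _ k) ?mul0r.
Qed.

Lemma hadamard_weight_entry (x y : 'I_N) : (H *m X *m H) x y =
  (\sum_j ((-1) ^+ (bit x j != bit y j) *
     \prod_(i | i != j) ((-1) ^+ (bit x i != bit y i) + 1))) / 2 ^+ n.
Proof.
rewrite hadamard_conj_diag -sum_character_weight.
under eq_bigr do rewrite hadamard_entry_prod mulrAC.
rewrite -mulr_suml; congr (_ / _).
rewrite -(sum_bits (fun b => \prod_i sgnterm (fun i => bit x i != bit y i) i (b i) *
   (\sum_j (b j : nat))%:R)).
apply: eq_bigr => z _; congr (_ * _); rewrite /hweight; congr (_%:R).
by apply: eq_bigr => j _; rewrite ffunE.
Qed.

Lemma hadamard_weight_offdiag (x y : 'I_N) k : bit x k != bit y k ->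
  (H *m X *m H) x y = - (hdist x y == 1)%N%:R / 2.
Proof.
set a := fun i => bit x i != bit y i => ak.
rewrite hadamard_weight_entry (bigD1 k) //= [X in _ + X]big1 ?addr0; last first.
  by move=> j jk; rewrite (@prod_sgn1_eq0 a k) ?mulr0 // eq_sym.
rewrite ak expr1 mulN1r.
have two_exp : (2 ^+ n : R) = 2 * \prod_(i | i != k) 2.
  by rewrite -[X in 2 ^+ X](card_ord n) -prodr_const (bigD1 k).
have -> : (hdist x y == 1)%N = [forall (i | i != k), ~~ a i].
  rewrite /hdist (bigD1 k) //= ak add1n eqSS sum_nat_eq0.
  by apply: eq_forallb => i; rewrite /a; case: (bit x i != bit y i).
case: (boolP [forall (i | i != k), ~~ a i]) => [/forallP only_k|/forallPn [i]]; last first.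
  rewrite negb_imply negbK => /andP [ik ai].
  by rewrite (@prod_sgn1_eq0 a i) ?(oppr0, mul0r, mulr0n).
rewrite prod_sgn1_const; last by move=> i ik; have := only_k i; rewrite ik => /negbTE.
have prod_neq0 : \prod_(i | i != k) (2 : R) != 0.
  by apply: contraNneq two_exp_neq0 => p0; rewrite two_exp p0 mulr0.
by rewrite two_exp mulr1n; field; rewrite prod_neq0.
Qed.

Lemma diag_conj_entry (d : 'I_N -> R) (M : 'M[R]_N) x y :
  (diagf d *m M *m diagf d) x y = d x * M x y * d y.
Proof.
rewrite mxE (bigD1 y) //= big1 ?addr0; last first.
  by move=> z /negbTE zy; rewrite [diagf d z y]mxE zy mulr0.
rewrite [diagf d y y]mxE eqxx; congr (_ * _).
rewrite mxE (bigD1 x) //= big1 ?addr0; last first.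
  by move=> z /negbTE zx; rewrite [diagf d x z]mxE eq_sym zx mul0r.
by rewrite [diagf d x x]mxE eqxx.
Qed.

Variable f : 'I_N -> bool.
Local Notation D := (diagf (gsign R f)).
Local Notation A := (sens_adj R f).

(* The heart of the lemma: H (R X R - X) H = D (H X H) D - H X H = A_f, since
   g(x) g(y) - 1 is -2 exactly when f(x) != f(y). *)
Lemma hadamard_conj_Q : H *m (Rmx R f *m X *m Rmx R f - X) *m H = A.
Proof.
have -> : H *m (Rmx R f *m X *m Rmx R f - X) *m H = D *m (H *m X *m H) *m D - H *m X *m H.
  by rewrite mulmxBr mulmxBl /Rmx !mulmxA hadamard_invol mul1mx
    -!mulmxA hadamard_invol mulmx1 !mulmxA.
apply/matrixP => x y; rewrite [in LHS]mxE [Z in _ + Z]mxE diag_conj_entry [A x y]mxE /gsign.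
have [/eqP fxy|fxy] := boolP (f x == f y).
  by rewrite andbF fxy; case: (f y); rewrite /=; ring.
have [k xyk] : exists k, bit x k != bit y k.
  by apply: bits_neq; apply: contraNneq fxy => ->.
rewrite (hadamard_weight_offdiag xyk) andbT.
by move: fxy; case: (f x); case: (f y) => //= _; case: (hdist x y == 1)%N; rewrite /=; field.
Qed.

Lemma sens_adjT : A^T = A.
Proof.
apply/matrixP => x y; rewrite !mxE /hdist (eq_sym (f y)).
by congr (if (_ == _)%N && _ then _ else _); apply: eq_bigr => i _; rewrite eq_sym.
Qed.

(* G_f is bipartite (edges change the weight parity): A_xy (-1)^|y| = -(-1)^|x| A_xy. *)
Lemma sens_adj_parity (x y : 'I_N) :
  A x y * (-1) ^+ hweight y = - ((-1) ^+ hweight x * A x y).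
Proof.
rewrite mxE; case: ifP => [/andP [/eqP dist1 _]|_]; last by rewrite mul0r mulr0 oppr0.
rewrite mul1r mulr1 -signr_odd -[(-1) ^+ hweight x]signr_odd.
have := weight_parity x y; rewrite dist1 oddD.
by case: (odd (hweight x)); case: (odd (hweight y)); rewrite //= expr1 expr0 ?opprK.
Qed.

Lemma sens_adj_flip (s : R) (u : 'cV[R]_N) : A *m u = - s *: u ->
  exists2 u' : 'cV[R]_N, A *m u' = s *: u' & sqnorm u' = sqnorm u.
Proof.
move=> Au; set u' := \col_x ((-1) ^+ hweight x * u x 0); exists u'.
  apply/matrixP => x j; rewrite (ord1 j) [LHS]mxE [RHS]mxE [u' x 0]mxE.
  under eq_bigr => y _ do rewrite [u' y 0]mxE mulrA sens_adj_parity mulNr -mulrA.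
  rewrite sumrN -mulr_sumr.
  have := congr1 (fun M : 'cV[R]_N => M x 0) Au; rewrite [in X in X -> _]mxE => ->.
  by rewrite mxE; ring.
apply: eq_bigr => x _; rewrite mxE exprMn -signr_odd.
by case: (odd _); rewrite ?expr1 ?expr0 ?sqrrN expr1n mul1r.
Qed.

End Hadamard.

Unset Implicit Arguments.
Set Strict Implicit.

Theorem lemma4p2 (R : realType) (n : nat) (f : 'I_(2 ^ n) -> bool) :
  (exists v : 'cV[R]_(2 ^ n), vnorm v = 1 /\
     qform (Rmx R f *m weightmx R n *m Rmx R f - weightmx R n) v = lambdaf R f) /\
  (forall v : 'cV[R]_(2 ^ n), vnorm v = 1 ->
     qform (Rmx R f *m weightmx R n *m Rmx R f - weightmx R n) v <= lambdaf R f).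
Proof.
set Q := _ - _; set H := hadamard R n; set A := sens_adj R f.
have orthH : H^T *m H = 1%:M by rewrite hadamardT hadamard_invol.
have QE : Q = H^T *m A *m H.
  have HQH : H *m Q *m H = A := hadamard_conj_Q R f.
  by rewrite hadamardT -HQH !mulmxA hadamard_invol mul1mx -mulmxA hadamard_invol mulmx1.
have enormH v : enorm (H *m v) = enorm v by rewrite /enorm sqnorm_orthogonal.
have qformE v : qform Q v = bform A (H *m v) (H *m v) by rewrite -bform_conj -QE.
have [[u [u1 u_max]] le_onorm] :=
  max_bform_onorm (expn_gt0 2 n) (sens_adjT R f) (@sens_adj_flip R n f _).
change (lambdaf R f) with (onorm A); split.
  exists (H *m u); split; first by rewrite -[vnorm _]/(enorm _) enormH.
  by rewrite qformE mulmxA hadamard_invol mul1mx.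
by move=> v v1; rewrite qformE; apply: le_onorm; rewrite enormH.
Qed.
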